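(* Let $A$ be a ${\mathbb K}$-algebra and let $R=A[X_1,\ldots,X_m]$ be the polynomial algebra over $A$ in $m$ commuting (central) variables. Then $$\operatorname{Z}(R)=\operatorname{Z}(A)[X_1,\ldots,X_m]\cong \operatorname{Z}(A)\otimes_{{\mathbb K}}{\mathbb K}[X_1,\ldots,X_m].$$ Assume in addition that $A$ is finitely generated as a ${\mathbb K}$-algebra and that $\operatorname{Der}(A)=\operatorname{InnDer}(A)\oplus M$ for some $\operatorname{Z}(A)$-submodule $M$ of $\operatorname{Der}(A)$. Then $$\operatorname{Der}(R)=\operatorname{InnDer}(R)\oplus \overline{M}\oplus\bigoplus_{j=1}^m \operatorname{Z}(R)\,\partial_j,$$ where each $D\in M$ is extended to a derivation of $R$ by setting $D(X_i)=0$ for all $i\in[1,m]$, $\overline M=\operatorname{Z}(R)M$ (so $\overline M\cong \operatorname{Z}(R)\otimes_{\operatorname{Z}(A)}M\cong {\mathbb K}[X_1,\ldots,X_m]\otimes_{{\mathbb K}}M$), and $\partial_j$ is the derivation of $R$ with $\partial_j(A)=0$ and $\partial_j(X_i)=\delta_{ij}$ for all $i,j\in[1,m]$.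
   Context: ${\mathbb K}$ is a field of characteristic $0$; all derivations are ${\mathbb K}$-linear. For a ${\mathbb K}$-algebra $B$, $\operatorname{Z}(B)$ is its center, $\operatorname{Der}(B)$ its Lie algebra of ${\mathbb K}$-derivations and $\operatorname{InnDer}(B)=\{\operatorname{ad}_x: x\in B\}$ its inner derivations, where $\operatorname{ad}_x(b)=xb-bx$. *)

From HB Require Import structures.
From mathcomp Require Import all_boot all_order all_algebra.
From mathcomp Require Import mpoly.
Set Implicit Arguments. Unset Strict Implicit. Unset Printing Implicit Defensive.
Import Order.TTheory GRing.Theory.
Local Open Scope ring_scope.

(* polynomials via multinomials' {mpoly A[m]}, which is a
   ring for any (noncommutative) ring A, with central variables 'X_i. *)

Definition central (T : nzRingType) (x : T) : Prop := forall y : T, x * y = y * x.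

Definition ad (T : nzRingType) (x : T) : T -> T := fun b => x * b - b * x.

Definition is_der (K : fieldType) (T : nzRingType) (sc : K -> T -> T)
  (D : T -> T) : Prop :=
  [/\ forall x y, D (x + y) = D x + D y,
      forall (k : K) x, D (sc k x) = sc k (D x)
    & forall x y, D (x * y) = D x * y + x * D y].

Definition scA (K : fieldType) (A : algType K) (k : K) (a : A) : A := k *: a.
Definition scR (K : fieldType) (A : algType K) (m : nat) (k : K)
  (p : {mpoly A[m]}) : {mpoly A[m]} := (k%:A : A) *: p.

Inductive in_subalg (K : fieldType) (A : algType K) (s : seq A) : A -> Prop :=
  | sub_gen a : a \in s -> in_subalg s a
  | sub_one : in_subalg s 1
  | sub_add a b : in_subalg s a -> in_subalg s b -> in_subalg s (a + b)
  | sub_mul a b : in_subalg s a -> in_subalg s b -> in_subalg s (a * b)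
  | sub_scale (k : K) a : in_subalg s a -> in_subalg s (k *: a).

Definition fin_gen (K : fieldType) (A : algType K) : Prop :=
  exists s : seq A, forall a : A, in_subalg s a.

(* extension of D : A -> A to R by acting on coefficients, D(X_i) = 0 *)
Definition bar_der (A : nzRingType) (m : nat) (D : A -> A)
  (p : {mpoly A[m]}) : {mpoly A[m]} :=
  \sum_(mn <- msupp p) D (p@_mn) *: 'X_[mn].

Definition in_Mbar (A : nzRingType) (m : nat) (M : (A -> A) -> Prop)
  (N : {mpoly A[m]} -> {mpoly A[m]}) : Prop :=
  exists (n : nat) (z : 'I_n -> {mpoly A[m]}) (Ds : 'I_n -> (A -> A)),
    [/\ forall i, central (z i), forall i, M (Ds i)
      & forall p, N p = \sum_(i < n) z i * bar_der (Ds i) p].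

From HB Require Import structures.
From mathcomp Require Import all_boot all_order all_algebra.
From mathcomp Require Import mpoly.
From Stdlib Require Import FunctionalExtensionality IndefiniteDescription.

(* The variables of R = A[X_1..X_m] are central, so comparing coefficients of
   p * c and c * p for constants c shows that p is central exactly when all its
   coefficients are.
   A derivation D of R is determined by its values on A and on the variables.
   Writing D a = \sum_k D_k(a) X^k for a in A, every D_k is a derivation of A,
   and only finitely many D_k are nonzero: for k outside the supports of the
   D g, g a generator of A, D_k kills the generators and hence all of A.
   Decomposing D_k = ad x_k + N_k with N_k in M yields
   D = ad (\sum_k x_k X^k) + \sum_k X^k * bar N_k + \sum_j D(X_j) d_j,
   the coefficients D(X_j) being central because the X_j are.
   For uniqueness, evaluation at X_j isolates the d_j-components, and the
   coefficients at constants of ad x = - N show ad x_k in M, hence x_k central. *)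

Set Implicit Arguments.
Unset Strict Implicit.
Unset Printing Implicit Defensive.
Import GRing.Theory.
Local Open Scope ring_scope.

Section MpolyCentre.
Variables (A : nzRingType) (m : nat).
Local Notation R := {mpoly A[m]}.
Implicit Types (p : R) (c : A).

Lemma mcoeffMC p c k : (p * c%:MP)@_k = p@_k * c.
Proof.
elim/mpolyind: p => [|c' k' p _ _ IH]; first by rewrite mul0r !mcoeff0 mul0r.
rewrite mulrDl !mcoeffD IH mulrDl -scalerAl -(commr_mpolyX k' c%:MP).
rewrite mul_mpolyC scalerA !mcoeffZ mcoeffX.
by case: eqP; rewrite ?mulr1 ?mulr0 ?mul0r.
Qed.

Lemma mcoeff_sumX (S : seq 'X_{1..m}) (F : 'X_{1..m} -> A) k : uniq S ->
  (\sum_(l <- S) F l *: ('X_[l] : R))@_k = if k \in S then F k else 0.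
Proof.
move=> uS; rewrite raddf_sum /=; case: ifP => Sk.
  rewrite (bigD1_seq k) //= mcoeffZ mcoeffX eqxx mulr1 big1 ?addr0 // => l.
  by move=> /negbTE lk; rewrite mcoeffZ mcoeffX lk mulr0.
rewrite big_seq big1 // => l Sl; rewrite mcoeffZ mcoeffX.
by case: eqP => [lk|]; [move: Sk; rewrite -lk Sl | rewrite mulr0].
Qed.

Lemma central_mcoeff p : central p -> forall k, central p@_k.
Proof.
move=> cp k c; have /(congr1 (mcoeff k)) := cp c%:MP.
by rewrite mcoeffMC mcoeffCM.
Qed.

Lemma central_mpolyC p : (forall c, p * c%:MP = c%:MP * p) -> central p.
Proof.
move=> pC q; elim/mpolyind: q => [|c k q _ _ IH]; first by rewrite mulr0 mul0r.
by rewrite mulrDr mulrDl IH -mul_mpolyC mulrA pC -!mulrA (commr_mpolyX k p).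
Qed.

Lemma centralP p : central p <-> (forall k, central p@_k).
Proof.
split=> [|cp]; first exact: central_mcoeff.
by apply: central_mpolyC => c; apply/mpolyP => k; rewrite mcoeffMC mcoeffCM cp.
Qed.

End MpolyCentre.

Section Derivations.
Variables (K : fieldType) (T : nzRingType) (sc : K -> T -> T).
Implicit Types D E : T -> T.

Lemma der0 D : is_der sc D -> D 0 = 0.
Proof. by case=> DD _ _; apply: (@addrI _ (D 0)); rewrite -DD !addr0. Qed.

Lemma der1 D : is_der sc D -> D 1 = 0.
Proof.
case=> _ _ /(_ 1 1); rewrite !mulr1 mul1r => D11.
by apply: (@addIr _ (D 1)); rewrite add0r -D11.
Qed.

Lemma der_sum D : is_der sc D -> forall I (r : seq I) (P : pred I) F,
  D (\sum_(i <- r | P i) F i) = \sum_(i <- r | P i) D (F i).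
Proof.
by move=> dD I r P F; case: (dD) => DD _ _; rewrite (big_morph D DD (der0 dD)).
Qed.

Lemma is_der_eq D E : D =1 E -> is_der sc D -> is_der sc E.
Proof. by move=> DE [DD DZ DM]; split=> *; rewrite -!DE. Qed.

End Derivations.

Lemma adN (T : nzRingType) (x a : T) : ad (- x) a = - ad x a.
Proof. by rewrite /ad mulNr mulrN opprK opprB addrC. Qed.

Lemma der_subalg_eq0 (K : fieldType) (A : algType K) (s : seq A) D a :
  is_der (@scA K A) D -> {in s, D =1 fun=> 0} -> in_subalg s a -> D a = 0.
Proof.
move=> dD Ds0; have [DD DZ DM] := dD.
elim=> {a} [a /Ds0 -> //||a b _ Da _ Db|a b _ Da _ Db|k a _ Da].
- exact: der1 dD.
- by rewrite DD Da Db addr0.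
- by rewrite DM Da Db mul0r mulr0 addr0.
- by rewrite DZ Da /scA scaler0.
Qed.

Section PolynomialDerivations.
Variables (K : fieldType) (A : algType K) (m : nat).
Local Notation R := {mpoly A[m]}.
Local Notation derA := (is_der (@scA K A)).
Local Notation derR := (is_der (@scR K A m)).
Implicit Types (p q x : R) (c : A) (D E : R -> R).

Lemma scRE (k : K) p : scR k p = (k%:A : A)%:MP * p.
Proof. by rewrite /scR mul_mpolyC. Qed.

Lemma central_scalar (k : K) : central ((k%:A : A)%:MP : R).
Proof.
apply/centralP => l a; rewrite mcoeffC.
by case: eqP; rewrite ?mulr1 ?mulr0 ?mul0r // mulr_algl mulr_algr.
Qed.

Lemma is_der_add D E : derR D -> derR E -> derR (fun p => D p + E p).
Proof.
move=> [DD DZ DM] [ED EZ EM]; split=> *.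
- by rewrite DD ED addrACA.
- by rewrite DZ EZ /scR scalerDr.
- by rewrite DM EM mulrDl mulrDr addrACA.
Qed.

Lemma is_der_sum n (F : 'I_n -> R -> R) :
  (forall i, derR (F i)) -> derR (fun p => \sum_(i < n) F i p).
Proof.
move=> dF; split=> *.
- by rewrite -big_split; apply: eq_bigr => i _; case: (dF i).
- by rewrite /scR scaler_sumr; apply: eq_bigr => i _; case: (dF i) => _ -> _.
- rewrite mulr_suml mulr_sumr -big_split; apply: eq_bigr => i _.
  by case: (dF i) => _ _ ->.
Qed.

Lemma is_der_centralM z D : central z -> derR D -> derR (fun p => z * D p).
Proof.
move=> cz [DD DZ DM]; split=> [p q|k p|p q].
- by rewrite DD mulrDr.
- by rewrite DZ !scRE !mulrA (central_scalar _ z).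
- by rewrite DM mulrDr !mulrA (cz p).
Qed.

Lemma is_der_ad x : derR (ad x).
Proof.
split=> *.
- by rewrite /ad mulrDr mulrDl opprD addrACA.
- by rewrite /ad !scRE mulrBr !mulrA (central_scalar _ x) -!mulrA.
- by rewrite /ad mulrBl mulrBr !mulrA addrA subrK.
Qed.

Lemma is_der_mderiv j : derR (mderiv j).
Proof. by split=> *; rewrite ?mderivD ?mderivZ ?mderivM. Qed.

Lemma mcoeff_bar_der (d : A -> A) p k : d 0 = 0 -> (bar_der d p)@_k = d p@_k.
Proof.
rewrite /bar_der mcoeff_sumX ?msupp_uniq // => d0.
by case: ifP => // /negbT /memN_msupp_eq0 ->.
Qed.

Lemma bar_derC (d : A -> A) c : d 0 = 0 -> bar_der d (c%:MP : R) = (d c)%:MP.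
Proof.
move=> d0; apply/mpolyP => k; rewrite mcoeff_bar_der // !mcoeffC.
by case: eqP; rewrite ?mulr1 ?mulr0.
Qed.

Lemma bar_derX (d : A -> A) j : d 0 = 0 -> d 1 = 0 -> bar_der d ('X_j : R) = 0.
Proof.
move=> d0 d1; apply/mpolyP => k.
by rewrite mcoeff_bar_der // mcoeffX mcoeff0; case: eqP.
Qed.

Lemma is_der_bar d : derA d -> derR (bar_der d).
Proof.
move=> dd; have [dD dZ dM] := dd; have d0 := der0 dd.
split=> *; apply/mpolyP => k; rewrite ?mcoeffD ?mcoeffZ !mcoeff_bar_der //.
- by rewrite !mcoeffD dD.
- by rewrite !mcoeffZ !mulr_algl; apply: dZ.
- rewrite !mcoeffM (der_sum dd) -big_split; apply: eq_bigr => i _.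
  by rewrite !mcoeff_bar_der // dM.
Qed.

Lemma adX x j : ad x 'X_j = 0.
Proof. by rewrite /ad (commr_mpolyX _ x) subrr. Qed.

Lemma mcoeff_adC x c k : (ad x c%:MP)@_k = ad x@_k c.
Proof. by rewrite /ad mcoeffB mcoeffMC mcoeffCM. Qed.

Lemma mderivX1 (i j : 'I_m) : ('X_j : R)^`M(i) = (j == i)%:R.
Proof.
rewrite mderivX mnm1E; case: eqP => [->|_]; last by rewrite scale0r.
have -> : (U_(i) - U_(i) = 0)%MM by apply/mnmP => l; rewrite !mnmE subnn.
by rewrite mpolyX0 scale1r.
Qed.

Lemma sum_mderivX (z : 'I_m -> R) j : \sum_(i < m) z i * ('X_j : R)^`M(i) = z j.
Proof.
rewrite (bigD1 j) //= mderivX1 eqxx mulr1 big1 ?addr0 // => i /negbTE ij.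
by rewrite mderivX1 eq_sym ij mulr0.
Qed.

Lemma sum_mderivC (z : 'I_m -> R) c : \sum_(i < m) z i * (c%:MP : R)^`M(i) = 0.
Proof. by rewrite big1 // => i _; rewrite mderivC mulr0. Qed.

Lemma der_mpoly_ext D E : derR D -> derR E ->
  (forall c, D c%:MP = E c%:MP) -> (forall j, D 'X_j = E 'X_j) -> D =1 E.
Proof.
move=> dD dE DEC DEX; have [DD _ DM] := dD; have [ED _ EM] := dE.
have DEM p q : D p = E p -> D q = E q -> D (p * q) = E (p * q).
  by move=> DEp DEq; rewrite DM EM DEp DEq.
have DEXm k : D 'X_[k] = E 'X_[k].
  rewrite mpolyXE_id; apply: (big_ind (fun q => D q = E q)) => //.
    by rewrite (der1 dD) (der1 dE).
  move=> i _; elim: (k i) => [|n IH]; rewrite ?expr0 ?exprS ?DEM //.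
  by rewrite (der1 dD) (der1 dE).
elim/mpolyind => [|c k p _ _ IH]; first by rewrite (der0 dD) (der0 dE).
by rewrite DD ED IH -mul_mpolyC DEM.
Qed.

Definition der_coef D (k : 'X_{1..m}) (a : A) : A := (D a%:MP)@_k.

Lemma is_der_coef D k : derR D -> derA (der_coef D k).
Proof.
case=> DD DZ DM; rewrite /der_coef; split=> [a b|l a|a b].
- by rewrite mpolyCD DD mcoeffD.
- by rewrite /scA -mulr_algl mpolyCM mul_mpolyC DZ /scR mcoeffZ mulr_algl.
- by rewrite mpolyCM DM mcoeffD mcoeffMC mcoeffCM.
Qed.

Lemma der_coef_finite D : fin_gen A -> derR D ->
  exists2 S : seq 'X_{1..m},
    uniq S & forall k a, k \notin S -> der_coef D k a = 0.
Proof.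
move=> [s gen_s] dD; exists (undup (flatten [seq msupp (D g%:MP) | g <- s])).
  exact: undup_uniq.
move=> k a; rewrite mem_undup => kS.
apply: der_subalg_eq0 (is_der_coef k dD) _ (gen_s a) => g sg.
by apply: memN_msupp_eq0; apply: contra kS => kD; apply/flatten_mapP; exists g.
Qed.

Lemma central_derX D j : derR D -> central (D 'X_j).
Proof.
case=> _ _ DM; apply: central_mpolyC => c.
have := DM 'X_j c%:MP; rewrite -(commr_mpolyX _ c%:MP) DM.
by rewrite (commr_mpolyX _ (D c%:MP)) addrC => /addIr.
Qed.

End PolynomialDerivations.

Section ExtendedSubmodule.
Variables (K : fieldType) (A : algType K) (m : nat) (M : (A -> A) -> Prop).
Local Notation R := {mpoly A[m]}.
Local Notation derA := (is_der (@scA K A)).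
Local Notation derR := (is_der (@scR K A m)).
Hypotheses (M_der : forall d, M d -> derA d) (M0 : M (fun=> 0))
  (MD : forall d1 d2, M d1 -> M d2 -> M (fun a => d1 a + d2 a))
  (MZ : forall z d, central z -> M d -> M (fun a => z * d a)).

Lemma M_central_sum n (c : 'I_n -> A) (ds : 'I_n -> A -> A) :
  (forall i, central (c i)) -> (forall i, M (ds i)) ->
  M (fun a => \sum_(i < n) c i * ds i a).
Proof.
elim: n c ds => [|n IH] c ds cc Mds.
  have -> : (fun a => \sum_(i < 0) c i * ds i a) = fun=> 0.
    by apply: functional_extensionality => a; rewrite big_ord0.
  exact: M0.
pose w := widen_ord (leqnSn n).
have -> : (fun a => \sum_(i < n.+1) c i * ds i a)
    = fun a => \sum_(i < n) c (w i) * ds (w i) a + c ord_max * ds ord_max a.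
  by apply: functional_extensionality => a; rewrite big_ord_recr.
by apply: MD; [apply: IH | apply: MZ].
Qed.

Lemma in_Mbar_der (N : R -> R) : in_Mbar M N -> derR N.
Proof.
case=> n [z [ds [cz Mds EN]]]; apply: (is_der_eq (fun p => esym (EN p))).
apply: is_der_sum => i.
by apply: is_der_centralM => //; apply/is_der_bar/M_der.
Qed.

Lemma in_Mbar_X (N : R -> R) j : in_Mbar M N -> N 'X_j = 0.
Proof.
case=> n [z [ds [_ Mds ->]]]; rewrite big1 // => i _.
by have dd := M_der (Mds i); rewrite bar_derX ?mulr0 ?(der0 dd) ?(der1 dd).
Qed.

Lemma in_Mbar_coef (N : R -> R) k : in_Mbar M N -> M (der_coef N k).
Proof.
case=> n [z [ds [cz Mds EN]]].
have -> : der_coef N k = fun a => \sum_(i < n) (z i)@_k * ds i a.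
  apply: functional_extensionality => a; rewrite /der_coef EN raddf_sum.
  apply: eq_bigr => i _ /=.
  by rewrite bar_derC ?(der0 (M_der (Mds i))) // mcoeffMC.
by apply: M_central_sum => // i; apply: central_mcoeff.
Qed.

Lemma in_Mbar_monomials (S : seq 'X_{1..m}) (ds : 'X_{1..m} -> A -> A) :
  (forall k, M (ds k)) ->
  in_Mbar M (fun p : R => \sum_(k <- S) 'X_[k] * bar_der (ds k) p).
Proof.
move=> Mds; exists (size S), (fun i => 'X_[nth 0%MM S i]).
exists (fun i => ds (nth 0%MM S i)).
split=> [i q|//|p]; first by rewrite (commr_mpolyX _ q).
by rewrite (big_nth 0%MM) big_mkord.
Qed.

Lemma is_der_decomposition (x : R) (N : R -> R) (z : 'I_m -> R) :
  in_Mbar M N -> (forall j, central (z j)) ->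
  derR (fun p => ad x p + N p + \sum_(j < m) z j * p^`M(j)).
Proof.
move=> MN cz; apply: is_der_add; first apply: is_der_add.
- exact: is_der_ad.
- exact: in_Mbar_der.
- by apply: is_der_sum => j; apply: is_der_centralM => //; apply: is_der_mderiv.
Qed.

Lemma decomposition_unique (x : R) (N : R -> R) (z : 'I_m -> R) :
  (forall y, M (ad y) -> forall a, ad y a = 0) ->
  in_Mbar M N -> (forall p, ad x p + N p + \sum_(j < m) z j * p^`M(j) = 0) ->
  [/\ forall p, ad x p = 0, forall p, N p = 0 & forall j p, z j * p^`M(j) = 0].
Proof.
move=> innM MN E0.
have z0 j : z j = 0.
  by have := E0 'X_j; rewrite adX (in_Mbar_X _ MN) sum_mderivX !add0r.
have adN0 p : ad x p + N p = 0.
  by have := E0 p; rewrite big1 ?addr0 // => j _; rewrite z0 mul0r.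
have cx : central x.
  apply/centralP => k a; apply/eqP.
  rewrite -subr_eq0 -[_ - _]opprK -adN oppr_eq0.
  apply/eqP/innM; suff -> : ad (- x@_k) = der_coef N k by apply: in_Mbar_coef.
  apply: functional_extensionality => b; apply/eqP.
  by rewrite adN eqr_oppLR -addr_eq0 -mcoeff_adC -mcoeffD adN0 mcoeff0.
have adx0 p : ad x p = 0 by rewrite /ad cx subrr.
split=> [//|p|j p]; last by rewrite z0 mul0r.
by have := adN0 p; rewrite adx0 add0r.
Qed.

Lemma decomposition_exists (D : R -> R) :
  fin_gen A ->
  (forall d, derA d -> exists y dM, M dM /\ forall a, d a = ad y a + dM a) ->
  derR D ->
  exists (x : R) (N : R -> R) (z : 'I_m -> R),
    [/\ in_Mbar M N, forall j, central (z j)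
      & forall p, D p = ad x p + N p + \sum_(j < m) z j * p^`M(j)].
Proof.
move=> fgA decA dD; have [S uS S0] := der_coef_finite fgA dD.
have /functional_choice[yN yNE] : forall k, exists yN : A * (A -> A),
    M yN.2 /\ forall a, der_coef D k a = ad yN.1 a + yN.2 a.
  move=> k; have [y [dM DE]] := decA _ (is_der_coef k dD).
  by exists (y, dM).
pose x : R := \sum_(k <- S) (yN k).1 *: 'X_[k].
pose N (p : R) := \sum_(k <- S) 'X_[k] * bar_der (yN k).2 p.
have MN : in_Mbar M N by apply: in_Mbar_monomials => k; case: (yNE k).
have cz j : central (D 'X_j) by apply: central_derX.
exists x, N, (fun j => D 'X_j); split=> //.
apply: der_mpoly_ext => // [|c|j]; first exact: is_der_decomposition.
  have NC : N c%:MP = \sum_(k <- S) (yN k).2 c *: 'X_[k].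
    apply: eq_bigr => k _; have dd := M_der (yNE k).1.
    by rewrite bar_derC ?(der0 dd) // -(commr_mpolyX _ (_%:MP)) mul_mpolyC.
  apply/mpolyP => k.
  rewrite sum_mderivC addr0 mcoeffD mcoeff_adC NC !mcoeff_sumX //.
  case: ifP => [_|/negbT kS]; first exact: (yNE k).2.
  by rewrite -[LHS]/(der_coef D k c) S0 // /ad mul0r mulr0 subrr addr0.
by rewrite adX (in_Mbar_X _ MN) sum_mderivX !add0r.
Qed.

End ExtendedSubmodule.

Theorem theorem2p1 (K : fieldType) (A : algType K) (m : nat)
  (charK0 : [pchar K] =i pred0) :
  (forall p : {mpoly A[m]},
      central p <-> (forall mn : 'X_{1..m}, central (p@_mn))) /\
  (forall M : (A -> A) -> Prop,
     fin_gen A ->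
     (forall D, M D -> is_der (@scA K A) D) ->
     M (fun _ => 0) ->
     (forall D1 D2, M D1 -> M D2 -> M (fun a => D1 a + D2 a)) ->
     (forall z D, central z -> M D -> M (fun a => z * D a)) ->
     (forall D : A -> A,
        is_der (@scA K A) D <->
        exists x N, M N /\ forall a, D a = ad x a + N a) ->
     (forall x, M (ad x) -> forall a, ad x a = 0) ->
     (forall D : {mpoly A[m]} -> {mpoly A[m]},
        is_der (@scR K A m) D <->
        exists (x : {mpoly A[m]}) N (z : 'I_m -> {mpoly A[m]}),
          [/\ in_Mbar M N, forall j, central (z j)
            & forall p, D p = ad x p + N p + \sum_(j < m) z j * p^`M(j)]) /\
     (forall (x : {mpoly A[m]}) N (z : 'I_m -> {mpoly A[m]}),
        in_Mbar M N -> (forall j, central (z j)) ->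
        (forall p, ad x p + N p + \sum_(j < m) z j * p^`M(j) = 0) ->
        [/\ forall p, ad x p = 0, forall p, N p = 0
          & forall j p, z j * p^`M(j) = 0])).
Proof.
split=> [p|M fgA M_der M0 MD MZ decA innM]; first exact: centralP.
split=> [D|x N z MN _]; last first.
  exact: (decomposition_unique M_der M0 MD MZ innM MN).
split=> [|[x [N [z [MN cz DE]]]]].
  by apply: decomposition_exists => // d /decA.
by apply: is_der_eq (fun p => esym (DE p)) (is_der_decomposition M_der x MN cz).
Qed.
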